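(* For all integers $q\ge1$ and $t\ge0$, $\mathsf{INDEL}_{\mathrm{det}}(q,t)\le \mathsf{DEL}_{\mathrm{det}}(q,t)=\mathsf{INS}_{\mathrm{det}}(q,t)=\mathsf{INS}_{\mathrm{cor}}(q,t).$
   Context: Let $[q]=\{0,1,\dots,q-1\}$. For $1\le m\le q$, a partial permutation of length $m$ over $[q]$ is a sequence $\pi=(\pi_1,\dots,\pi_m)$ of $m$ pairwise distinct elements of $[q]$. Let $\mathcal{S}_m^q$ be the set of those of length $m$ and $\mathcal{S}_{\mathrm{all}}^q=\bigcup_{m=1}^{q}\mathcal{S}_m^q$. A code is any subset of $\mathcal{S}_{\mathrm{all}}^q$. Juxtaposition $\omega\pi$ denotes concatenation with $\omega$ on the left. Tail deletions: for $\pi$ of length $m$ and integer $j\ge 0$, $\pi_{\downarrow j}=(\pi_{k+1},\dots,\pi_m)$ with $k=\min(j,m-1)$; $\mathcal{B}_{\mathrm{del}}^t(\pi)=\{\pi_{\downarrow j}:0\le j\le t\}$. Tail insertions: $\mathcal{B}_{\mathrm{ins}}^t(\pi)$ is the set of all $\omega\pi\in\mathcal{S}_{\mathrm{all}}^q$ with $\omega$ a (possibly empty) sequence of at most $t$ elements of $[q]$. Tail indels: $\mathcal{B}_{\mathrm{indel}}^t(\pi)$ is the set of partial permutations obtainable from $\pi$ by at most $t$ operations, each either a single tail deletion (removing the first symbol of a partial permutation of length at least $2$) or a single tail insertion (prepending an element of $[q]$ not already occurring). For $X\in\{\mathrm{del},\mathrm{ins},\mathrm{indel}\}$, a code $\mathcal{C}$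 is $t$-tail-$X$-detecting if $\mathcal{C}\cap\mathcal{B}_X^t(\pi)=\{\pi\}$ for all $\pi\in\mathcal{C}$, and $t$-tail-$X$-correcting if $\mathcal{B}_X^t(\pi_1)\cap\mathcal{B}_X^t(\pi_2)=\emptyset$ for all distinct $\pi_1,\pi_2\in\mathcal{C}$. $\mathsf{DEL}_{\mathrm{det}}(q,t)$, $\mathsf{INS}_{\mathrm{det}}(q,t)$, $\mathsf{INDEL}_{\mathrm{det}}(q,t)$ denote the maximum sizes of $t$-tail-deletion-, insertion-, indel-detecting codes in $\mathcal{S}_{\mathrm{all}}^q$, and $\mathsf{INS}_{\mathrm{cor}}(q,t)$ the maximum size of a $t$-tail-insertion-correcting code. *)

(* Partial permutations over [q] = {0..q-1} are represented as
   seq nat; the first element of the sequence is pi_1 (the "tail" end, where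
   tail deletions/insertions act). Codes are finite duplicate-free lists of
   partial permutations (i.e. finite subsets of S_all^q). *)
From mathcomp Require Import all_boot.
Set Implicit Arguments. Unset Strict Implicit. Unset Printing Implicit Defensive.

Fixpoint words (q m : nat) : seq (seq nat) :=
  match m with
  | 0 => [:: [::]]
  | m'.+1 => [seq x :: w | x <- iota 0 q, w <- words q m']
  end.

Definition pperms (q : nat) : seq (seq nat) :=
  [seq s <- flatten [seq words q m | m <- iota 1 q] | uniq s].

(* all sub-lists of a list; for a duplicate-free list these are all its subsets *)
Fixpoint subseqs (T : Type) (s : seq T) : seq (seq T) :=
  match s with
  | [::] => [:: [::]]
  | x :: s' => let r := subseqs s' in r ++ [seq x :: c | c <- r]
  end.

Definition in_del (t : nat) (pi sigma : seq nat) : bool :=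
  has (fun j => sigma == drop (minn j (size pi).-1) pi) (iota 0 t.+1).

Definition in_ins (q t : nat) (pi sigma : seq nat) : bool :=
  [&& sigma \in pperms q, size pi <= size sigma, size sigma <= size pi + t
    & drop (size sigma - size pi) sigma == pi].

Definition indel_nbrs (q : nat) (s : seq nat) : seq (seq nat) :=
  (if 1 < size s then [:: behead s] else [::]) ++
  [seq x :: s | x <- iota 0 q & x \notin s].

Fixpoint in_indel (q t : nat) (pi sigma : seq nat) : bool :=
  (sigma == pi) ||
  match t with
  | 0 => false
  | t'.+1 => has (fun tau => in_indel q t' tau sigma) (indel_nbrs q pi)
  end.

Definition detecting (ball : seq nat -> seq nat -> bool) (C : seq (seq nat)) : bool :=
  all (fun p => all (fun s => ball p s ==> (s == p)) C) C.

(* t-tail-insertion-correcting: balls of distinct codewords are disjoint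
   (balls are subsets of S_all^q, so it suffices to range over pperms q) *)
Definition ins_correcting (q t : nat) (C : seq (seq nat)) : bool :=
  all (fun p1 => all (fun p2 => (p1 != p2) ==>
        ~~ has (fun s => in_ins q t p1 s && in_ins q t p2 s) (pperms q)) C) C.

Definition max_code (q : nat) (P : seq (seq nat) -> bool) : nat :=
  \max_(C <- subseqs (pperms q) | P C) size C.

Definition DEL_det (q t : nat) : nat := max_code q (detecting (in_del t)).
Definition INS_det (q t : nat) : nat := max_code q (detecting (in_ins q t)).
Definition INDEL_det (q t : nat) : nat := max_code q (detecting (in_indel q t)).
Definition INS_cor (q t : nat) : nat := max_code q (ins_correcting q t).

From mathcomp Require Import all_boot.
From mathcomp Require Import zify.

(* All four quantities are maxima of [size] over codes satisfying a property,
   and the properties compare code by code.  Tail deletions are special tail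
   indels, so indel-detecting codes are deletion-detecting.  [sigma] is a tail
   deletion of [pi] exactly when [pi] is a tail insertion into [sigma], and
   detection is symmetric in the two codewords.  Finally two insertion balls
   meet only if one centre lies in the other ball: a common element has both
   centres as suffixes, so the shorter centre is a suffix of the longer one. *)

Lemma max_code_mono q (P Q : pred (seq (seq nat))) :
  {in subseqs (pperms q), forall C, P C -> Q C} ->
  max_code q P <= max_code q Q.
Proof.
move=> PQ; apply/bigmax_leqP_seq => C memC PC.
by apply: leq_bigmax_seq => //; apply: PQ.
Qed.

Lemma eq_in_max_code q (P Q : pred (seq (seq nat))) :
  {in subseqs (pperms q), P =1 Q} -> max_code q P = max_code q Q.
Proof.
move=> PQ; apply/eqP; rewrite eqn_leq.
by rewrite !max_code_mono // => C memC; rewrite PQ.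
Qed.

Lemma mem_subseqs (T : eqType) (s C : seq T) :
  C \in subseqs s -> {subset C <= s}.
Proof.
elim: s C => [|x s IH] C /=; first by rewrite inE => /eqP ->.
rewrite mem_cat => /orP [/IH sub y /sub|/mapP [c /IH sub ->] y].
  by rewrite inE orbC => ->.
by rewrite !inE => /orP [->|/sub ->] //; rewrite orbT.
Qed.

Lemma pperms_neq_nil q p : p \in pperms q -> p != [::].
Proof.
rewrite mem_filter => /andP [_ /flatten_mapP [m]].
rewrite mem_iota; case: m => [|m] //= _ /allpairsPdep [x [w [_ _ ->]]] //.
Qed.

Lemma detectingP (ball : seq nat -> seq nat -> bool) C :
  reflect {in C &, forall p s, ball p s -> s = p} (detecting ball C).
Proof.
apply: (iffP allP) => [det p s memp mems ball_ps|det p memp].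
  by apply/eqP; apply: (implyP (allP (det p memp) s mems)).
by apply/allP => s mems; apply/implyP => /det -> //.
Qed.

Lemma detecting_sub (ball ball' : seq nat -> seq nat -> bool) C :
  {in C &, forall p s, ball' p s -> ball p s} ->
  detecting ball C -> detecting ball' C.
Proof.
move=> sub /detectingP det; apply/detectingP => p s memp mems.
by move/sub => /(_ memp mems); apply: det.
Qed.

Lemma detecting_flip (ball : seq nat -> seq nat -> bool) C :
  detecting (fun p s => ball s p) C = detecting ball C.
Proof.
by apply/detectingP/detectingP => det p s memp mems /det ->.
Qed.

Lemma in_indel_drop q t p k :
  k <= t -> k <= (size p).-1 -> in_indel q t p (drop k p).
Proof.
elim: t p k => [|t IH] p k.
  by rewrite leqn0 => /eqP -> _; rewrite drop0 /= eqxx.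
case: k => [|k] le_kt le_kp; first by rewrite drop0 /= eqxx.
case: p le_kp => [|x [|y p]] //= le_kp.
by rewrite /indel_nbrs /= IH ?orbT.
Qed.

Lemma in_del_indel q t p s : in_del t p s -> in_indel q t p s.
Proof.
case/hasP => j; rewrite mem_iota add0n => lt_jt /eqP ->.
apply: in_indel_drop; lia.
Qed.

Lemma in_del_ins q t p s :
  p \in pperms q -> s \in pperms q -> in_del t p s = in_ins q t s p.
Proof.
move=> memp mems; rewrite /in_ins memp /=.
have s_gt0 : 0 < size s by case: s mems => // /pperms_neq_nil.
apply/idP/idP.
  case/hasP => j; rewrite mem_iota add0n => lt_jt /eqP ->.
  rewrite size_drop.
  have -> : size p - (size p - minn j (size p).-1) = minn j (size p).-1 by lia.
  by rewrite eqxx andbT; apply/andP; split; lia.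
case/and3P => le_sp le_pst /eqP drop_p; apply/hasP; exists (size p - size s).
  by rewrite mem_iota add0n ltnS leq_subLR.
have -> : minn (size p - size s) (size p).-1 = size p - size s by lia.
by rewrite drop_p.
Qed.

Lemma in_ins_refl q t s : s \in pperms q -> in_ins q t s s.
Proof. by move=> mems; rewrite /in_ins mems leqnn leq_addr subnn drop0 eqxx. Qed.

Lemma in_ins_meet {q t} {p1 p2 x : seq nat} :
  in_ins q t p1 x -> in_ins q t p2 x ->
  size p1 <= size p2 -> p2 \in pperms q -> in_ins q t p1 p2.
Proof.
case/and4P => _ le1 ge1 /eqP drop1 /and4P [_ le2 ge2 /eqP drop2] le12 mem2.
rewrite /in_ins mem2 le12 /=; apply/andP; split; first lia.
rewrite -drop2 drop_drop -drop1; apply/eqP; congr drop.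
by move: (congr1 size drop2) (congr1 size drop1); rewrite !size_drop; lia.
Qed.

Lemma ins_correcting_detecting q t C :
  {subset C <= pperms q} ->
  ins_correcting q t C = detecting (in_ins q t) C.
Proof.
move=> subC; apply/allP/detectingP => [cor p s memp mems ball_ps|det p1 mem1].
  apply/eqP/negPn/negP => neq_sp.
  move: (implyP (allP (cor p memp) s mems)); rewrite eq_sym neq_sp => /(_ isT).
  by case/hasP; exists s; rewrite ?subC // ball_ps in_ins_refl ?subC.
apply/allP => p2 mem2; apply/implyP => neq12; apply/hasP => -[x _ /andP [b1 b2]].
case: (leqP (size p1) (size p2)) => [le12|/ltnW le21].
  by move: neq12; rewrite (det p1 p2) ?eqxx // (in_ins_meet b1 b2) ?subC.
by move: neq12; rewrite (det p2 p1) ?eqxx // (in_ins_meet b2 b1) ?subC.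
Qed.

Theorem mainTheorem3 (q t : nat) (hq : 1 <= q) :
  INDEL_det q t <= DEL_det q t /\
  DEL_det q t = INS_det q t /\
  INS_det q t = INS_cor q t.
Proof.
split; [|split].
- apply: max_code_mono => C _; apply: detecting_sub => p s _ _.
  exact: in_del_indel.
- apply: eq_in_max_code => C /mem_subseqs subC.
  rewrite -[RHS]detecting_flip; apply/idP/idP; apply: detecting_sub => p s memp mems;
    by rewrite (in_del_ins q) ?subC.
- apply: eq_in_max_code => C /mem_subseqs subC.
  by rewrite ins_correcting_detecting.
Qed.
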